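(* For every integer $n\ge 0$ and every $\mathbf t\in\mathbb R^4_H$, $$D_n^H(\mathbf t)=\Theta_{n+1}(\mathbf t)-\Theta_n(\mathbf t),\qquad\text{where}\quad \Theta_n(\mathbf t):=\prod_{j=1}^4\frac{\sin \pi n t_j}{\sin \pi t_j}.$$
   Context: Let $\mathbb R^4_H=\{\mathbf t\in\mathbb R^4: t_1+t_2+t_3+t_4=0\}$ and $\mathbb Z^4_H=\mathbb Z^4\cap\mathbb R^4_H$. Let $\mathbb H=\{\mathbf k\in\mathbb Z^4_H: k_1\equiv k_2\equiv k_3\equiv k_4 \pmod 4\}$. For $n\ge 0$ let $\mathbb H_n^*=\{\mathbf k\in\mathbb H: -4n\le k_i-k_j\le 4n \text{ for all } 1\le i<j\le 4\}$, and define the Dirichlet kernel $D_n^H(\mathbf t)=\sum_{\mathbf k\in\mathbb H_n^*}e^{\frac{\pi i}{2}\mathbf k\cdot\mathbf t}$ for $\mathbf t\in\mathbb R^4_H$. The quotients $\frac{\sin\pi n t}{\sin \pi t}$ are understood as their continuous extensions at integer $t$. *)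

From Stdlib Require Import Reals ZArith List Lia Lra.
From Coquelicot Require Import Coquelicot.
Open Scope R_scope.

Definition cis (theta : R) : C := (cos theta, sin theta).

(* The quotient sin(pi n t)/sin(pi t), extended continuously at the zeros of
   sin(pi t) (i.e. at integer t) by its limit n cos(pi n t)/cos(pi t). *)
Definition sinq (n : nat) (t : R) : R :=
  if Req_EM_T (sin (PI * t)) 0
  then INR n * cos (PI * INR n * t) / cos (PI * t)
  else sin (PI * INR n * t) / sin (PI * t).

Definition Theta (n : nat) (t1 t2 t3 t4 : R) : R :=
  sinq n t1 * sinq n t2 * sinq n t3 * sinq n t4.

Definition Zvec4 := (Z * Z * Z * Z)%type.

Definition diff_ok (n : nat) (a b : Z) : bool :=
  (Z.leb (- 4 * Z.of_nat n) (a - b) && Z.leb (a - b) (4 * Z.of_nat n))%bool.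

Definition in_Hstar (n : nat) (k : Zvec4) : bool :=
  let '(k1, k2, k3, k4) := k in
  (Z.eqb (k1 + k2 + k3 + k4) 0 &&
   Z.eqb (k1 mod 4) (k2 mod 4) && Z.eqb (k1 mod 4) (k3 mod 4) &&
   Z.eqb (k1 mod 4) (k4 mod 4) &&
   diff_ok n k1 k2 && diff_ok n k1 k3 && diff_ok n k1 k4 &&
   diff_ok n k2 k3 && diff_ok n k2 k4 && diff_ok n k3 k4)%bool.

Definition Zrange (M : nat) : list Z :=
  map (fun i => (Z.of_nat i - Z.of_nat M)%Z) (seq 0 (2 * M + 1)).

(* A box in Z^4 that contains H_n^*: if k is in H_n^* then
   4 k_i = sum_j (k_i - k_j), so |k_i| <= 3n <= 12n. *)
Definition box (n : nat) : list Zvec4 :=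
  let r := Zrange (12 * n) in
  flat_map (fun a => flat_map (fun b => flat_map (fun c => map (fun d => (a,b,c,d)) r) r) r) r.

Definition Hstar (n : nat) : list Zvec4 :=
  filter (in_Hstar n) (box n).

Definition Csum (l : list C) : C := fold_right Cplus (RtoC 0) l.

Definition dot4 (k : Zvec4) (t1 t2 t3 t4 : R) : R :=
  let '(k1, k2, k3, k4) := k in
  IZR k1 * t1 + IZR k2 * t2 + IZR k3 * t3 + IZR k4 * t4.

Definition DH (n : nat) (t1 t2 t3 t4 : R) : C :=
  Csum (map (fun k => cis (PI / 2 * dot4 k t1 t2 t3 t4)) (Hstar n)).

(* Write [e(x) = exp(2 pi i x)].  The map
   [phi m = 4 m - (m_1 + ... + m_4)(1,1,1,1)] is a bijection from the points of
   the cube [{0..n}^4] having some zero coordinate onto [H_n^*]: any [k] in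
   [H_n^*] is [k_1 + 4 q] with [q] determined up to a constant vector, which is
   normalised by [min q = 0], and the constraints [|k_i - k_j| <= 4n] become
   [q_i <= n].  Since [t_1 + ... + t_4 = 0], the character [e(phi(m).t / 4)]
   equals [e(m.t)], which factors over the coordinates.  Summing over the cube
   minus the subcube [{1..n}^4] turns [D_n^H] into a difference of products of
   one-dimensional geometric sums, and [sum_{a<N} e(a t)] is
   [e((N-1)t/2) sin(pi N t) / sin(pi t)]; the phases cancel because
   [sum t_j = 0]. *)
From Stdlib Require Import Reals ZArith List Lia Lra Permutation.
From Coquelicot Require Import Coquelicot.
Open Scope R_scope.

Lemma flat_map_flat_map {A B D} (f : B -> list D) (g : A -> list B) (l : list A) :
  flat_map f (flat_map g l) = flat_map (fun x => flat_map f (g x)) l.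
Proof. induction l as [|a l IH]; simpl; [reflexivity|]. now rewrite flat_map_app, IH. Qed.

Lemma flat_map_map {A B D} (f : B -> list D) (g : A -> B) (l : list A) :
  flat_map f (map g l) = flat_map (fun x => f (g x)) l.
Proof. induction l as [|a l IH]; simpl; [reflexivity|]. now rewrite IH. Qed.

Definition list_prod4 {A} (l1 l2 l3 l4 : list A) : list (A * A * A * A) :=
  list_prod (list_prod (list_prod l1 l2) l3) l4.

Lemma list_prod4_flat_map {A} (l1 l2 l3 l4 : list A) :
  list_prod4 l1 l2 l3 l4 =
  flat_map (fun a => flat_map (fun b => flat_map
    (fun c => map (fun d => (a, b, c, d)) l4) l3) l2) l1.
Proof.
  unfold list_prod4; rewrite !list_prod_as_flat_map, !flat_map_flat_map.
  apply flat_map_ext; intros a; rewrite flat_map_map.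
  apply flat_map_ext; intros b; now rewrite flat_map_map.
Qed.

Lemma NoDup_list_prod {A B} (l : list A) (l' : list B) :
  NoDup l -> NoDup l' -> NoDup (list_prod l l').
Proof.
  intros Hl Hl'; induction Hl as [|a l Ha Hl IH]; simpl; [constructor|].
  apply NoDup_app; [|assumption|].
  - apply FinFun.Injective_map_NoDup; [intros x y E; now inversion E|assumption].
  - intros p Hp Hp'; apply in_map_iff in Hp as [b [<- _]].
    now apply in_prod_iff in Hp' as [? _].
Qed.

Lemma NoDup_list_prod4 {A} (l1 l2 l3 l4 : list A) :
  NoDup l1 -> NoDup l2 -> NoDup l3 -> NoDup l4 -> NoDup (list_prod4 l1 l2 l3 l4).
Proof. intros; unfold list_prod4; auto using NoDup_list_prod. Qed.

Lemma in_list_prod4 {A} (l1 l2 l3 l4 : list A) a b c d :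
  In (a, b, c, d) (list_prod4 l1 l2 l3 l4) <-> In a l1 /\ In b l2 /\ In c l3 /\ In d l4.
Proof. unfold list_prod4; rewrite !in_prod_iff; tauto. Qed.

Section ComplexSums.

Open Scope C_scope.

Lemma Csum_app (l1 l2 : list C) : Csum (l1 ++ l2) = Csum l1 + Csum l2.
Proof. induction l1; simpl; [ring|]. rewrite IHl1; ring. Qed.

Lemma Csum_perm (l l' : list C) : Permutation l l' -> Csum l = Csum l'.
Proof.
  induction 1; simpl; try congruence.
  now rewrite !Cplus_assoc, (Cplus_comm y x).
Qed.

Lemma Csum_scal_l {A} (k : C) (f : A -> C) (l : list A) :
  Csum (map (fun x => k * f x) l) = k * Csum (map f l).
Proof. induction l; simpl; [ring|]. rewrite IHl; ring. Qed.

Lemma Csum_map_filter_sub {A} (p : A -> bool) (g h : A -> C) (l : list A) :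
  (forall x, p x = true -> h x = 0) -> (forall x, p x = false -> h x = g x) ->
  Csum (map g (filter p l)) = Csum (map g l) - Csum (map h l).
Proof.
  intros Hp Hn; induction l as [|a l IH]; simpl; [ring|].
  destruct (p a) eqn:E; simpl; rewrite IH; [rewrite (Hp a E)|rewrite (Hn a E)]; ring.
Qed.

Lemma Csum_list_prod {A B} (f : A -> C) (g : B -> C) (l : list A) (l' : list B) :
  Csum (map (fun p => f (fst p) * g (snd p)) (list_prod l l')) =
  Csum (map f l) * Csum (map g l').
Proof.
  induction l as [|a l IH]; simpl; [ring|].
  rewrite map_app, Csum_app, IH, map_map; simpl.
  rewrite (Csum_scal_l (f a) g); ring.
Qed.

Definition tensor4 {A} (f1 f2 f3 f4 : A -> C) (m : A * A * A * A) : C :=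
  let '(a, b, c, d) := m in f1 a * f2 b * f3 c * f4 d.

Lemma Csum_tensor4 {A} (f1 f2 f3 f4 : A -> C) (l1 l2 l3 l4 : list A) :
  Csum (map (tensor4 f1 f2 f3 f4) (list_prod4 l1 l2 l3 l4)) =
  Csum (map f1 l1) * Csum (map f2 l2) * Csum (map f3 l3) * Csum (map f4 l4).
Proof.
  unfold list_prod4; rewrite <- !Csum_list_prod.
  f_equal; apply map_ext; now intros [[[a b] c] d].
Qed.

End ComplexSums.

Section Exponentials.

Open Scope C_scope.

Lemma cis_add (a b : R) : cis a * cis b = cis (a + b).
Proof. unfold cis, Cmult; simpl. rewrite cos_plus, sin_plus. f_equal; ring. Qed.

Lemma cis_RtoC_mult4 (a1 a2 a3 a4 x1 x2 x3 x4 : R) : (a1 + a2 + a3 + a4 = 0)%R ->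
  cis a1 * x1 * (cis a2 * x2) * (cis a3 * x3) * (cis a4 * x4) = RtoC (x1 * x2 * x3 * x4).
Proof.
  intros Ha.
  transitivity (cis a1 * cis a2 * cis a3 * cis a4 * RtoC (x1 * x2 * x3 * x4)).
  { rewrite !RtoC_mult; ring. }
  rewrite !cis_add, Ha; unfold cis, RtoC, Cmult; simpl.
  rewrite cos_0, sin_0; f_equal; ring.
Qed.

Definition cis2pi (t : R) (a : nat) : C := cis (2 * PI * INR a * t).

Definition cis2pi_nz (t : R) (a : nat) : C := if Nat.eqb a 0 then 0 else cis2pi t a.

Lemma sin_INR_mult_eq0 (x : R) (k : nat) : sin x = 0%R -> sin (INR k * x) = 0%R.
Proof.
  intros Hx; induction k as [|k IH].
  - simpl; now rewrite Rmult_0_l, sin_0.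
  - rewrite S_INR, Rmult_plus_distr_r, Rmult_1_l, sin_plus, IH, Hx; ring.
Qed.

Lemma Csum_cis2pi_mult_sin (t : R) (N : nat) :
  Csum (map (cis2pi t) (seq 0 N)) * sin (PI * t) =
  cis (PI * (INR N - 1) * t) * sin (PI * INR N * t).
Proof.
  induction N as [|N IH].
  - simpl; rewrite Rmult_0_r, Rmult_0_l, sin_0; ring.
  - rewrite seq_S, map_app, Csum_app, Cmult_plus_distr_r, IH, S_INR; simpl.
    unfold cis2pi, cis, Cmult, Cplus, RtoC; simpl.
    replace (PI * (INR N + 1 - 1) * t)%R with (PI * INR N * t)%R by ring.
    replace (PI * (INR N + 1) * t)%R with (PI * INR N * t + PI * t)%R by ring.
    replace (2 * PI * INR N * t)%R with (PI * INR N * t + PI * INR N * t)%R by ring.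
    replace (PI * (INR N - 1) * t)%R with (PI * INR N * t - PI * t)%R by ring.
    rewrite !cos_plus, !sin_plus, !cos_minus, !sin_minus; f_equal; ring.
Qed.

Lemma Csum_ones {A} (l : list A) : Csum (map (fun _ => RtoC 1) l) = INR (length l).
Proof.
  induction l as [|a l IH]; [reflexivity|].
  change (RtoC 1 + Csum (map (fun _ => RtoC 1) l) = INR (S (length l))).
  rewrite IH, S_INR, RtoC_plus; ring.
Qed.

Lemma cis2pi_sin_eq0 (t : R) (a : nat) : sin (PI * t) = 0%R -> cis2pi t a = 1.
Proof.
  intros H0; unfold cis2pi, cis.
  replace (2 * PI * INR a * t)%R with (2 * (INR a * (PI * t)))%R by ring.
  rewrite cos_2a_sin, sin_2a, sin_INR_mult_eq0 by assumption.
  unfold RtoC; f_equal; ring.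
Qed.

(* The phase is the real sign [cos (PI N t) cos (PI t)], which cancels the
   sign of the continuous extension [sinq N t]. *)
Lemma cis_mult_sinq_sin_eq0 (t : R) (N : nat) : sin (PI * t) = 0%R ->
  cis (PI * (INR N - 1) * t) * RtoC (INR N * cos (PI * INR N * t) / cos (PI * t)) = INR N.
Proof.
  set (x := (PI * t)%R); intros H0.
  assert (HsN : sin (INR N * x) = 0%R) by now apply sin_INR_mult_eq0.
  assert (Hc : (cos x * cos x = 1)%R)
    by (pose proof (sin2_cos2 x); unfold Rsqr in *; nra).
  assert (HcN : (cos (INR N * x) * cos (INR N * x) = 1)%R)
    by (pose proof (sin2_cos2 (INR N * x)); unfold Rsqr in *; nra).
  assert (cos x <> 0%R) by (intros E; rewrite E in Hc; lra).
  replace (PI * (INR N - 1) * t)%R with (INR N * x - x)%R by (unfold x; ring).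
  replace (PI * INR N * t)%R with (INR N * x)%R by (unfold x; ring).
  unfold cis, Cmult, RtoC; simpl; rewrite cos_minus, sin_minus, HsN, H0.
  f_equal; [|ring].
  transitivity (INR N * (cos (INR N * x) * cos (INR N * x)))%R; [field; assumption|].
  rewrite HcN; ring.
Qed.

Lemma Csum_cis2pi (t : R) (N : nat) :
  Csum (map (cis2pi t) (seq 0 N)) = cis (PI * (INR N - 1) * t) * sinq N t.
Proof.
  unfold sinq; destruct (Req_EM_T (sin (PI * t)) 0) as [H0|H0].
  - rewrite (map_ext _ _ (fun a => cis2pi_sin_eq0 t a H0)), Csum_ones, length_seq.
    now rewrite cis_mult_sinq_sin_eq0.
  - transitivity (Csum (map (cis2pi t) (seq 0 N)) * sin (PI * t) * RtoC (/ sin (PI * t))).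
    { rewrite <- Cmult_assoc, <- RtoC_mult, Rinv_r by assumption.
      now rewrite Cmult_1_r. }
    now rewrite Csum_cis2pi_mult_sin, <- Cmult_assoc, <- RtoC_mult.
Qed.

Lemma Csum_cis2pi_nz (t : R) (n : nat) :
  Csum (map (cis2pi_nz t) (seq 0 (S n))) = cis (PI * INR (S n) * t) * sinq n t.
Proof.
  rewrite <- cons_seq, <- seq_shift, map_cons, map_map.
  rewrite (map_ext _ (fun a => cis2pi t 1 * cis2pi t a)).
  - change (0 + Csum (map (fun a => cis2pi t 1 * cis2pi t a) (seq 0 n)) =
            cis (PI * INR (S n) * t) * sinq n t).
    rewrite Cplus_0_l, Csum_scal_l, Csum_cis2pi, Cmult_assoc.
    unfold cis2pi; rewrite cis_add, (S_INR n); simpl (INR 1).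
    do 2 f_equal; ring.
  - intros a; unfold cis2pi_nz, cis2pi; simpl Nat.eqb; cbv iota.
    rewrite cis_add, (S_INR a); simpl (INR 1); apply f_equal; ring.
Qed.

End Exponentials.

Definition cube (n : nat) : list (nat * nat * nat * nat) :=
  let r := seq 0 (S n) in list_prod4 r r r r.

Definition has_zero (m : nat * nat * nat * nat) : bool :=
  let '(a, b, c, d) := m in (Nat.eqb a 0 || Nat.eqb b 0 || Nat.eqb c 0 || Nat.eqb d 0)%bool.

Definition cube_to_H (m : nat * nat * nat * nat) : Zvec4 :=
  let '(a, b, c, d) := m in
  let s := Z.of_nat (a + b + c + d) in
  (4 * Z.of_nat a - s, 4 * Z.of_nat b - s, 4 * Z.of_nat c - s, 4 * Z.of_nat d - s)%Z.

Lemma has_zero_spec a b c d :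
  has_zero (a, b, c, d) = true <-> a = 0%nat \/ b = 0%nat \/ c = 0%nat \/ d = 0%nat.
Proof. unfold has_zero; rewrite !Bool.orb_true_iff, !Nat.eqb_eq; tauto. Qed.

Lemma in_cube n a b c d :
  In (a, b, c, d) (cube n) <-> (a <= n /\ b <= n /\ c <= n /\ d <= n)%nat.
Proof. unfold cube; rewrite in_list_prod4, !in_seq; lia. Qed.

Lemma in_Hstar_spec n k1 k2 k3 k4 : in_Hstar n (k1, k2, k3, k4) = true <->
  (k1 + k2 + k3 + k4 = 0 /\
   k1 mod 4 = k2 mod 4 /\ k1 mod 4 = k3 mod 4 /\ k1 mod 4 = k4 mod 4 /\
   -4 * Z.of_nat n <= k1 - k2 <= 4 * Z.of_nat n /\
   -4 * Z.of_nat n <= k1 - k3 <= 4 * Z.of_nat n /\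
   -4 * Z.of_nat n <= k1 - k4 <= 4 * Z.of_nat n /\
   -4 * Z.of_nat n <= k2 - k3 <= 4 * Z.of_nat n /\
   -4 * Z.of_nat n <= k2 - k4 <= 4 * Z.of_nat n /\
   -4 * Z.of_nat n <= k3 - k4 <= 4 * Z.of_nat n)%Z.
Proof. unfold in_Hstar, diff_ok; rewrite !Bool.andb_true_iff, !Z.eqb_eq, !Z.leb_le; tauto. Qed.

Lemma in_Zrange M z : In z (Zrange M) <-> (- Z.of_nat M <= z <= Z.of_nat M)%Z.
Proof.
  unfold Zrange; rewrite in_map_iff; split.
  - intros [i [<- Hi]]; apply in_seq in Hi; lia.
  - intros Hz; exists (Z.to_nat (z + Z.of_nat M)); rewrite in_seq; lia.
Qed.

Lemma NoDup_Zrange M : NoDup (Zrange M).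
Proof.
  apply FinFun.Injective_map_NoDup; [intros x y E; lia|apply seq_NoDup].
Qed.

Lemma box_list_prod4 n :
  box n = list_prod4 (Zrange (12 * n)) (Zrange (12 * n)) (Zrange (12 * n)) (Zrange (12 * n)).
Proof. now rewrite list_prod4_flat_map. Qed.

Lemma In_Hstar n k : In k (Hstar n) <-> in_Hstar n k = true.
Proof.
  unfold Hstar; rewrite filter_In; split; [tauto|]; intros Hk; split; [|assumption].
  destruct k as [[[k1 k2] k3] k4]; apply in_Hstar_spec in Hk.
  rewrite box_list_prod4; apply in_list_prod4; rewrite !in_Zrange; lia.
Qed.

Lemma NoDup_Hstar n : NoDup (Hstar n).
Proof.
  apply NoDup_filter; rewrite box_list_prod4.
  apply NoDup_list_prod4; apply NoDup_Zrange.
Qed.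

Lemma cube_to_H_in_Hstar n m : In m (cube n) -> in_Hstar n (cube_to_H m) = true.
Proof.
  destruct m as [[[a b] c] d]; rewrite in_cube; intros Hm.
  apply in_Hstar_spec; repeat split; try lia; Z.to_euclidean_division_equations; lia.
Qed.

(* Each [k_i] is [k_1 + 4 q_i]; shifting [q] so that its minimum is [0] gives
   the preimage, and the bounds on [k_i - k_j] bound the shifted [q_i] by [n]. *)
Lemma cube_to_H_surj n k : in_Hstar n k = true ->
  exists m, In m (cube n) /\ has_zero m = true /\ cube_to_H m = k.
Proof.
  destruct k as [[[k1 k2] k3] k4]; rewrite in_Hstar_spec; intros Hk.
  set (q2 := ((k2 - k1) / 4)%Z); set (q3 := ((k3 - k1) / 4)%Z);
    set (q4 := ((k4 - k1) / 4)%Z).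
  assert (Hq : (k2 = k1 + 4 * q2 /\ k3 = k1 + 4 * q3 /\ k4 = k1 + 4 * q4)%Z)
    by (unfold q2, q3, q4; Z.to_euclidean_division_equations; lia).
  set (qm := Z.min 0 (Z.min q2 (Z.min q3 q4))).
  exists (Z.to_nat (- qm), Z.to_nat (q2 - qm), Z.to_nat (q3 - qm), Z.to_nat (q4 - qm)).
  rewrite in_cube, has_zero_spec; unfold cube_to_H, qm in *.
  repeat split; try lia; f_equal; [f_equal; [f_equal|]|]; lia.
Qed.

(* [cube_to_H] only forgets a constant shift, which a zero coordinate on
   both sides pins down. *)
Lemma cube_to_H_inj m m' : has_zero m = true -> has_zero m' = true ->
  cube_to_H m = cube_to_H m' -> m = m'.
Proof.
  destruct m as [[[a b] c] d], m' as [[[a' b'] c'] d'].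
  rewrite !has_zero_spec; unfold cube_to_H; intros Hz Hz' E.
  unfold Zvec4 in E; rewrite !pair_equal_spec in E |- *.
  assert (a = a') by (destruct Hz as [|[|[|]]], Hz' as [|[|[|]]]; lia).
  lia.
Qed.

Lemma Hstar_perm n : Permutation (map cube_to_H (filter has_zero (cube n))) (Hstar n).
Proof.
  apply NoDup_Permutation; [|apply NoDup_Hstar|].
  - apply FinFun.Injective_map_NoDup_in.
    + intros m m' Hm Hm'; apply filter_In in Hm, Hm'; apply cube_to_H_inj; tauto.
    + apply NoDup_filter, NoDup_list_prod4; apply seq_NoDup.
  - intros k; rewrite In_Hstar, in_map_iff; split.
    + intros [m [<- Hm]]; apply filter_In in Hm as [Hm _].
      now apply cube_to_H_in_Hstar.
    + intros Hk; destruct (cube_to_H_surj n k Hk) as [m [Hm [Hz E]]].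
      exists m; rewrite filter_In; tauto.
Qed.

Lemma cis_dot_cube_to_H t1 t2 t3 t4 m : t1 + t2 + t3 + t4 = 0 ->
  cis (PI / 2 * dot4 (cube_to_H m) t1 t2 t3 t4) =
  tensor4 (cis2pi t1) (cis2pi t2) (cis2pi t3) (cis2pi t4) m.
Proof.
  intros Ht; destruct m as [[[a b] c] d]; unfold cube_to_H, dot4, tensor4, cis2pi.
  rewrite !cis_add, !minus_IZR, !mult_IZR, <- !INR_IZR_INZ, !plus_INR; f_equal.
  replace t4 with (- (t1 + t2 + t3)) by lra; field.
Qed.

Lemma tensor4_cis2pi_nz t1 t2 t3 t4 m :
  tensor4 (cis2pi_nz t1) (cis2pi_nz t2) (cis2pi_nz t3) (cis2pi_nz t4) m =
  if has_zero m then RtoC 0 else tensor4 (cis2pi t1) (cis2pi t2) (cis2pi t3) (cis2pi t4) m.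
Proof.
  destruct m as [[[a b] c] d]; unfold tensor4, cis2pi_nz, has_zero.
  destruct (Nat.eqb a 0), (Nat.eqb b 0), (Nat.eqb c 0), (Nat.eqb d 0); simpl; ring.
Qed.

Theorem theorem3p10 (n : nat) (t1 t2 t3 t4 : R) (Ht : t1 + t2 + t3 + t4 = 0) :
  DH n t1 t2 t3 t4 = RtoC (Theta (S n) t1 t2 t3 t4 - Theta n t1 t2 t3 t4).
Proof.
  unfold DH.
  rewrite <- (Csum_perm _ _ (Permutation_map _ (Hstar_perm n))), map_map.
  rewrite (map_ext _ _ (fun m => cis_dot_cube_to_H t1 t2 t3 t4 m Ht)).
  rewrite (Csum_map_filter_sub _ _
             (tensor4 (cis2pi_nz t1) (cis2pi_nz t2) (cis2pi_nz t3) (cis2pi_nz t4)));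
    [|intros m E; now rewrite tensor4_cis2pi_nz, E ..].
  unfold cube; rewrite !Csum_tensor4, !Csum_cis2pi, !Csum_cis2pi_nz.
  rewrite !cis_RtoC_mult4, <- RtoC_minus; [reflexivity| |];
    replace t4 with (- (t1 + t2 + t3)) by lra; ring.
Qed.
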